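(* Suppose the family of update functions $\mathrm{Upd}$ satisfies P1 and P2. If $\mathcal{M}=(W,\mathcal{F})$ is a measure space, $\Pr\in\Delta_{\mathcal{M}}$, $B\in\mathcal{F}$, and $\mathrm{Upd}^{\mathcal{M}}(\Pr,B)=\{\Pr'\}$, then $\Pr'=\Pr(\cdot|B)$.
   Context: A measure space is a pair $\mathcal{M}=(W,\mathcal{F})$ with $\mathcal{F}$ an algebra of subsets of $W$; $\Delta_{\mathcal{M}}$ is the set of all probability measures on $\mathcal{M}$. An update function on $\mathcal{M}$ is a map $\mathrm{Upd}^{\mathcal{M}}:2^{\Delta_{\mathcal{M}}}\times\mathcal{F}\to 2^{\Delta_{\mathcal{M}}}$ such that $\mathrm{Upd}^{\mathcal{M}}(X,B)=\emptyset$ whenever $\Pr(B)=0$ for all $\Pr\in X$; $\mathrm{Upd}^{\mathcal{M}}(\Pr,B)$ means $\mathrm{Upd}^{\mathcal{M}}(\{\Pr\},B)$. A family $\mathrm{Upd}=\{\mathrm{Upd}^{\mathcal{M}}\}$ has one update function for each measure space. $\Pr(A|B)=\Pr(A\cap B)/\Pr(B)$. A representation shift from $\mathcal{M}=(W,\mathcal{F})$ to $\mathcal{M}'=(W',\mathcal{F}')$ is a surjection $f:W\to W'$ with $f^{-1}(B)\in\mathcal{F}$ for all $B\in\mathcal{F}'$; $(f^*(\Pr))(A)=\Pr(f^{-1}(A))$, $f^*(X)=\{f^*(\Pr):\Pr\in X\}$. P1: for all $\mathcal{M}$, $X\subseteq\Delta_{\mathcal{M}}$, $B\in\mathcal{F}$: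 $\mathrm{Upd}^{\mathcal{M}}(X,B)\subseteq\{\Pr\in\Delta_{\mathcal{M}}:\Pr(B)=1\}$. P2: for every representation shift $f$ from $\mathcal{M}$ to $\mathcal{M}'$, every $X\subseteq\Delta_{\mathcal{M}}$ and $B\in\mathcal{F}'$: $\mathrm{Upd}^{\mathcal{M}'}(f^*(X),B)=f^*(\mathrm{Upd}^{\mathcal{M}}(X,f^{-1}(B)))$. *)

From Stdlib Require Import Reals ProofIrrelevance.
Open Scope R_scope.

(* An algebra of subsets of W (subsets are predicates W -> Prop).
   Closure under intersection is redundant (follows from the others) but
   included for convenience. *)
Record algebra (W : Type) := {
  in_alg : (W -> Prop) -> Prop;
  alg_full : in_alg (fun _ => True);
  alg_compl : forall A, in_alg A -> in_alg (fun w => ~ A w);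
  alg_union : forall A B, in_alg A -> in_alg B -> in_alg (fun w => A w \/ B w);
  alg_inter : forall A B, in_alg A -> in_alg B -> in_alg (fun w => A w /\ B w)
}.
Arguments in_alg {W} _ _.
Arguments alg_full {W} _.
Arguments alg_union {W} _ _ _ _ _.
Arguments alg_inter {W} _ _ _ _ _.

Definition mset {W : Type} (F : algebra W) := {A : W -> Prop | in_alg F A}.

Definition mfull {W} (F : algebra W) : mset F := exist _ (fun _ => True) (alg_full F).
Definition munion {W} {F : algebra W} (A B : mset F) : mset F :=
  exist _ (fun w => proj1_sig A w \/ proj1_sig B w)
        (alg_union F _ _ (proj2_sig A) (proj2_sig B)).
Definition minter {W} {F : algebra W} (A B : mset F) : mset F :=
  exist _ (fun w => proj1_sig A w /\ proj1_sig B w)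
        (alg_inter F _ _ (proj2_sig A) (proj2_sig B)).

Record prob {W : Type} (F : algebra W) := {
  pr :> mset F -> R;
  pr_nonneg : forall A, 0 <= pr A;
  pr_full : pr (mfull F) = 1;
  pr_add : forall A B : mset F,
      (forall w, proj1_sig A w -> proj1_sig B w -> False) ->
      pr (munion A B) = pr A + pr B
}.
Arguments pr {W F} _ _.

Definition pset {W} (F : algebra W) := prob F -> Prop.
Definition psingle {W} {F : algebra W} (P : prob F) : pset F := fun Q => Q = P.

Definition upd_fun {W} (F : algebra W) := pset F -> mset F -> pset F.

Definition is_update_fun {W} {F : algebra W} (U : upd_fun F) : Prop :=
  forall (X : pset F) (B : mset F),
    (forall P, X P -> P B = 0) -> forall Q, ~ U X B Q.

Definition upd_family := forall (W : Type) (F : algebra W), upd_fun F.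

Definition is_update_family (Upd : upd_family) : Prop :=
  forall (W : Type) (F : algebra W), is_update_fun (Upd W F).

Definition surjective {W W'} (f : W -> W') := forall y, exists x, f x = y.

Definition measurable_map {W W'} (F : algebra W) (F' : algebra W') (f : W -> W') :=
  forall B, in_alg F' B -> in_alg F (fun w => B (f w)).

Definition preim {W W'} {F : algebra W} {F' : algebra W'} {f : W -> W'}
  (Hf : measurable_map F F' f) (B : mset F') : mset F :=
  exist _ (fun w => proj1_sig B (f w)) (Hf _ (proj2_sig B)).

Lemma push_full {W W'} {F : algebra W} {F' : algebra W'} {f : W -> W'}
  (Hf : measurable_map F F' f) (P : prob F) : P (preim Hf (mfull F')) = 1.
Proof.
  rewrite <- (pr_full _ P). f_equal. unfold preim, mfull; simpl.
  f_equal. apply proof_irrelevance.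
Qed.

Lemma push_add {W W'} {F : algebra W} {F' : algebra W'} {f : W -> W'}
  (Hf : measurable_map F F' f) (P : prob F) (A B : mset F') :
  (forall w, proj1_sig A w -> proj1_sig B w -> False) ->
  P (preim Hf (munion A B)) = P (preim Hf A) + P (preim Hf B).
Proof.
  intros Hd.
  rewrite <- (pr_add _ P (preim Hf A) (preim Hf B)).
  - f_equal. unfold preim, munion; simpl. f_equal. apply proof_irrelevance.
  - intros w; simpl; apply Hd.
Qed.

Definition push {W W'} {F : algebra W} {F' : algebra W'} {f : W -> W'}
  (Hf : measurable_map F F' f) (P : prob F) : prob F' :=
  {| pr := fun B => P (preim Hf B);
     pr_nonneg := fun B => pr_nonneg _ P (preim Hf B);
     pr_full := push_full Hf P;
     pr_add := push_add Hf P |}.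

Definition pushset {W W'} {F : algebra W} {F' : algebra W'} {f : W -> W'}
  (Hf : measurable_map F F' f) (X : pset F) : pset F' :=
  fun Q => exists P, X P /\ Q = push Hf P.

Definition P1 (Upd : upd_family) : Prop :=
  forall (W : Type) (F : algebra W) (X : pset F) (B : mset F) (Q : prob F),
    Upd W F X B Q -> Q B = 1.

Definition P2 (Upd : upd_family) : Prop :=
  forall (W W' : Type) (F : algebra W) (F' : algebra W') (f : W -> W')
         (Hs : surjective f) (Hf : measurable_map F F' f)
         (X : pset F) (B : mset F') (Q : prob F'),
    Upd W' F' (pushset Hf X) B Q <-> pushset Hf (Upd W F X (preim Hf B)) Q.

(* Spread the mass [D {a0, b0}] over [n] two-point cells so that, for every [i],
   rotating the cells by [i] and then sending the first [m - 1] cells and half of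
   the next one to [a0], the rest to [b0], pushes the spread measure back to [D].
   These [n] maps are representation shifts with the same preimage of [{a0, b0}],
   so by P2 one measure [R] in the update upstairs is pushed by each of them to the
   update [rho] of [D].  Each cell goes to [a0] under at most [m] of the rotations,
   hence [n rho {a0} <= m], and [m / n] tends to [D {a0} / D {a0, b0}].  Exchanging
   [a0] and [b0] and using P1 gives equality.  A general space reduces to this one
   through the map sorting points into [A /\ B], [B \ A] and the complement of [B]. *)
From Stdlib Require Import Reals Lra Lia Psatz ClassicalEpsilon FunctionalExtensionality
  PropExtensionality ProofIrrelevance Classical ZArith.
Open Scope R_scope.

Section FinitelyAdditiveProbability.
Context {W : Type} {F : algebra W}.

Lemma in_alg_ext (S T : W -> Prop) :
  (forall w, S w <-> T w) -> in_alg F S -> in_alg F T.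
Proof.
  intros H HS. replace T with S; auto.
  apply functional_extensionality; intros w; apply propositional_extensionality; auto.
Qed.

Lemma in_alg_and_const (T : W -> Prop) (c : Prop) :
  in_alg F T -> in_alg F (fun w => T w /\ c).
Proof.
  intros HT. destruct (classic c) as [Hc|Hc].
  - apply (in_alg_ext T); auto. intros; tauto.
  - apply (in_alg_ext (fun w => ~ True)); [intros; tauto|]. apply alg_compl, alg_full.
Qed.

Lemma mset_ext (S T : mset F) :
  (forall w, proj1_sig S w <-> proj1_sig T w) -> S = T.
Proof.
  destruct S as [S HS], T as [T HT]; simpl; intros H.
  assert (S = T) as <-.
  { apply functional_extensionality; intro w; apply propositional_extensionality; auto. }
  f_equal. apply proof_irrelevance.
Qed.

Lemma pr_ext (P : prob F) (S T : mset F) :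
  (forall w, proj1_sig S w <-> proj1_sig T w) -> P S = P T.
Proof. intros H; rewrite (mset_ext S T H); reflexivity. Qed.

Lemma prob_ext (P Q : prob F) : (forall A, P A = Q A) -> P = Q.
Proof.
  destruct P as [p p1 p2 p3], Q as [q q1 q2 q3]; simpl; intros H.
  assert (p = q) as <- by (apply functional_extensionality; auto).
  f_equal; apply proof_irrelevance.
Qed.

Definition mcompl (S : mset F) : mset F :=
  exist _ (fun w => ~ proj1_sig S w) (alg_compl W F _ (proj2_sig S)).

Lemma pr_compl (P : prob F) (S : mset F) : P (mcompl S) = 1 - P S.
Proof.
  rewrite <- (pr_full F P), (pr_ext P (mfull F) (munion S (mcompl S))).
  - rewrite pr_add; [lra|]. simpl; tauto.
  - intros w; simpl; split; [intros _; apply classic|tauto].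
Qed.

Lemma pr_le1 (P : prob F) (S : mset F) : P S <= 1.
Proof. pose proof (pr_compl P S). pose proof (pr_nonneg F P (mcompl S)). lra. Qed.

Lemma pr_empty (P : prob F) (S : mset F) : (forall w, ~ proj1_sig S w) -> P S = 0.
Proof.
  intros H. assert (P S = P S + P S); [|lra].
  rewrite <- pr_add by (intros w Hw _; exact (H w Hw)).
  apply pr_ext; simpl; tauto.
Qed.

Lemma pr_split (P : prob F) (S T : mset F) :
  P S = P (minter S T) + P (minter S (mcompl T)).
Proof.
  rewrite <- pr_add by (simpl; tauto).
  apply pr_ext. intros w; simpl. destruct (classic (proj1_sig T w)); tauto.
Qed.

Lemma pr_mono (P : prob F) (S T : mset F) :
  (forall w, proj1_sig S w -> proj1_sig T w) -> P S <= P T.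
Proof.
  intros H. rewrite (pr_split P T S), (pr_ext P (minter T S) S) by (simpl; firstorder).
  pose proof (pr_nonneg F P (minter T (mcompl S))). lra.
Qed.

Lemma pr_inter_of_full (P : prob F) (A B : mset F) : P B = 1 -> P A = P (minter A B).
Proof.
  intros HB. rewrite (pr_split P A B).
  assert (P (minter A (mcompl B)) <= P (mcompl B)) by (apply pr_mono; simpl; tauto).
  rewrite pr_compl in H. pose proof (pr_nonneg F P (minter A (mcompl B))). lra.
Qed.

End FinitelyAdditiveProbability.

Definition discrete (T : Type) : algebra T.
Proof. refine {| in_alg := fun _ => True |}; intros; exact I. Defined.

Definition dset {T} (S : T -> Prop) : mset (discrete T) := exist _ S I.

Definition indicator (Q : Prop) : R := if excluded_middle_informative Q then 1 else 0.

Lemma indicator_or (P Q : Prop) : (P -> Q -> False) -> indicator (P \/ Q) = indicator P + indicator Q.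
Proof.
  intros H; unfold indicator;
  destruct (excluded_middle_informative (P \/ Q)), (excluded_middle_informative P),
    (excluded_middle_informative Q); try tauto; lra.
Qed.

Lemma indicator_nonneg (P : Prop) : 0 <= indicator P.
Proof. unfold indicator; destruct excluded_middle_informative; lra. Qed.

Section DiscreteProbability.
Context {T : Type} (P : prob (discrete T)).

Lemma dset_eta (E : mset (discrete T)) : E = dset (proj1_sig E).
Proof. apply mset_ext; simpl; tauto. Qed.

Lemma dset_ext (S S' : T -> Prop) : (forall z, S z <-> S' z) -> P (dset S) = P (dset S').
Proof. intros H; apply pr_ext; exact H. Qed.

Lemma dset_union (S S' : T -> Prop) : (forall z, S z -> S' z -> False) ->
  P (dset (fun z => S z \/ S' z)) = P (dset S) + P (dset S').
Proof. intros H. rewrite <- (pr_add _ P (dset S) (dset S') H). apply dset_ext; simpl; tauto. Qed.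

Lemma dset_empty (S : T -> Prop) : (forall z, ~ S z) -> P (dset S) = 0.
Proof. intros H; apply pr_empty; exact H. Qed.

Lemma dset_compl (S : T -> Prop) : P (dset (fun z => ~ S z)) = 1 - P (dset S).
Proof. rewrite <- (pr_compl P (dset S)). apply dset_ext; simpl; tauto. Qed.

Lemma dset_split (S U : T -> Prop) :
  P (dset S) = P (dset (fun z => U z /\ S z)) + P (dset (fun z => ~ U z /\ S z)).
Proof. rewrite <- dset_union by tauto. apply dset_ext. intros z. destruct (classic (U z)); tauto. Qed.

Lemma dset_point_inter (a : T) (S : T -> Prop) :
  P (dset (fun y => y = a /\ S y)) = indicator (S a) * P (dset (fun y => y = a)).
Proof.
  unfold indicator; destruct excluded_middle_informative as [H|H].
  - rewrite Rmult_1_l. apply dset_ext. intros z; split; [tauto|]. intros ->; auto.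
  - rewrite Rmult_0_l. apply dset_empty. intros z [-> Hz]; auto.
Qed.

Lemma dset_pair (Bp : T -> Prop) (a b : T) : a <> b -> (forall y, Bp y <-> y = a \/ y = b) ->
  P (dset Bp) = P (dset (fun y => y = a)) + P (dset (fun y => y = b)).
Proof. intros Hab HB. rewrite <- dset_union by (intros z -> ->; auto). apply dset_ext, HB. Qed.

End DiscreteProbability.

Fixpoint rsum (f : nat -> R) (n : nat) : R :=
  match n with O => 0 | S n' => rsum f n' + f n' end.

Lemma rsum_ext f g n : (forall k, (k < n)%nat -> f k = g k) -> rsum f n = rsum g n.
Proof.
  induction n; simpl; intros H; auto.
  rewrite IHn by (intros; apply H; lia). rewrite H by lia; auto.
Qed.

Lemma rsum_plus f g n : rsum (fun k => f k + g k) n = rsum f n + rsum g n.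
Proof. induction n; simpl; lra. Qed.

Lemma rsum_scal c f n : rsum (fun k => c * f k) n = c * rsum f n.
Proof. induction n; simpl; [lra|rewrite IHn; lra]. Qed.

Lemma rsum_const c n : rsum (fun _ => c) n = INR n * c.
Proof. induction n; simpl rsum; [simpl; lra|rewrite IHn, S_INR; lra]. Qed.

Lemma rsum_le f g n : (forall k, (k < n)%nat -> f k <= g k) -> rsum f n <= rsum g n.
Proof.
  induction n; simpl; intros H; [lra|].
  pose proof (H n ltac:(lia)). pose proof (IHn ltac:(intros; apply H; lia)). lra.
Qed.

Lemma rsum_nonneg f n : (forall k, (k < n)%nat -> 0 <= f k) -> 0 <= rsum f n.
Proof.
  intros H. replace 0 with (rsum (fun _ => 0) n) by (rewrite rsum_const; lra).
  apply rsum_le; auto.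
Qed.

Lemma rsum_swap (f : nat -> nat -> R) n m :
  rsum (fun i => rsum (fun k => f i k) m) n = rsum (fun k => rsum (fun i => f i k) n) m.
Proof. induction n; simpl; [rewrite rsum_const; lra|rewrite IHn, <- rsum_plus; reflexivity]. Qed.

Lemma rsum_shift f n : rsum f (S n) = f O + rsum (fun d => f (S d)) n.
Proof. induction n; simpl in *; [lra|rewrite IHn; lra]. Qed.

Lemma rsum_rot1 f n : (0 < n)%nat -> rsum (fun d => f ((d + 1) mod n)%nat) n = rsum f n.
Proof.
  intros Hn. destruct n as [|n']; [lia|].
  rewrite (rsum_shift f). change (rsum ?g (S n')) with (rsum g n' + g n'); cbv beta.
  replace ((n' + 1) mod S n')%nat with O.
  2:{ replace (n' + 1)%nat with (1 * S n')%nat by lia. rewrite Nat.Div0.mod_mul. reflexivity. }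
  rewrite (rsum_ext _ (fun d => f (S d)) n'); [lra|].
  intros k Hk. f_equal. rewrite Nat.mod_small by lia. lia.
Qed.

Lemma rsum_rot f n j : (0 < n)%nat -> rsum (fun k => f ((k + j) mod n)%nat) n = rsum f n.
Proof.
  intros Hn. revert f. induction j; intros f.
  - apply rsum_ext; intros k Hk. f_equal. rewrite Nat.add_0_r, Nat.mod_small; auto.
  - rewrite <- (rsum_rot1 f n Hn), <- (IHj (fun d => f ((d + 1) mod n)%nat)).
    apply rsum_ext; intros k Hk. f_equal.
    rewrite Nat.Div0.add_mod_idemp_l. f_equal. lia.
Qed.

Definition bool_to_R (b : bool) : R := if b then 1 else 0.

(* Of [n] cells, each split into a [true] and a [false] half, the first [m - 1]
   cells and the [true] half of cell [m - 1] are the ones sent to the point [a0]. *)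
Definition sent_to_a0 (m d : nat) (s : bool) : bool :=
  orb (Nat.ltb d (m - 1)) (andb s (Nat.eqb d (m - 1))).

Lemma rsum_sent_to_a0 m u v n : (1 <= m <= n)%nat ->
  rsum (fun d => u * bool_to_R (sent_to_a0 m d true) + v * bool_to_R (sent_to_a0 m d false)) n
  = (INR m - 1) * (u + v) + u.
Proof.
  intros Hmn.
  assert (G : forall N, rsum (fun d => u * bool_to_R (sent_to_a0 m d true)
                                    + v * bool_to_R (sent_to_a0 m d false)) N =
     if Nat.leb N (m - 1) then INR N * (u + v) else (INR m - 1) * (u + v) + u).
  { induction N.
    - simpl. destruct (Nat.leb 0 (m - 1)); simpl; lra.
    - simpl rsum. rewrite IHN. unfold sent_to_a0, bool_to_R.
      destruct (Nat.leb N (m-1)) eqn:E1; destruct (Nat.leb (S N) (m-1)) eqn:E2;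
      destruct (Nat.ltb N (m-1)) eqn:E3; destruct (Nat.eqb N (m-1)) eqn:E4; cbn [orb andb];
      apply Nat.leb_le in E1 || apply Nat.leb_gt in E1;
      apply Nat.leb_le in E2 || apply Nat.leb_gt in E2;
      apply Nat.ltb_lt in E3 || apply Nat.ltb_ge in E3;
      apply Nat.eqb_eq in E4 || apply Nat.eqb_neq in E4; try lia;
      rewrite ?S_INR; try lra;
      replace m with (S N) by lia; rewrite S_INR; lra. }
  rewrite G. destruct (Nat.leb n (m - 1)) eqn:E; [apply Nat.leb_le in E; lia|auto].
Qed.

(* Each half-cell is sent to [a0] by at most [m] of the [n] rotations. *)
Lemma rsum_rotations_sent_to_a0 (n m : nat) (al be : nat -> R) : (1 <= m <= n)%nat ->
  (forall k, 0 <= be k) ->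
  rsum (fun i => rsum (fun k => bool_to_R (sent_to_a0 m ((k + i) mod n) true) * al k
                              + bool_to_R (sent_to_a0 m ((k + i) mod n) false) * be k) n) n
  <= INR m * rsum (fun k => al k + be k) n.
Proof.
  intros Hmn Hbe. rewrite rsum_swap, <- rsum_scal. apply rsum_le. intros k _.
  set (cell := fun d => al k * bool_to_R (sent_to_a0 m d true)
                        + be k * bool_to_R (sent_to_a0 m d false)).
  rewrite (rsum_ext _ (fun i => cell ((i + k) mod n)%nat))
    by (intros i _; unfold cell; rewrite (Nat.add_comm i k); ring).
  rewrite (rsum_rot cell n k) by lia. unfold cell. rewrite rsum_sent_to_a0 by lia.
  pose proof (Hbe k). lra.
Qed.

Lemma pr_classes_rsum {T} (Pr : prob (discrete T)) (cl : T -> option (nat * bool))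
  (sel : nat -> bool -> bool) N :
  Pr (dset (fun z => exists k s, cl z = Some (k, s) /\ (k < N)%nat /\ sel k s = true)) =
  rsum (fun k => bool_to_R (sel k true) * Pr (dset (fun z => cl z = Some (k, true)))
               + bool_to_R (sel k false) * Pr (dset (fun z => cl z = Some (k, false)))) N.
Proof.
  induction N.
  - simpl. apply dset_empty. intros z [k [s [_ [H _]]]]; lia.
  - simpl rsum. rewrite <- IHN.
    assert (Hs : forall s, Pr (dset (fun z => cl z = Some (N, s) /\ sel N s = true)) =
                   bool_to_R (sel N s) * Pr (dset (fun z => cl z = Some (N, s)))).
    { intros s. unfold bool_to_R. destruct (sel N s).
      - rewrite Rmult_1_l. apply dset_ext. intuition.
      - rewrite Rmult_0_l. apply dset_empty. intros z [_ H]; discriminate. }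
    rewrite <- !Hs, <- !dset_union.
    + apply dset_ext. intros z; split.
      * intros [k [s [H1 [H2 H3]]]].
        destruct (Nat.eq_dec k N) as [->|Hne].
        -- right. destruct s; [left|right]; auto.
        -- left. exists k, s. repeat split; auto; lia.
      * intros [[k [s [H1 [H2 H3]]]] | [[H1 H2]|[H1 H2]]].
        -- exists k, s; repeat split; auto; lia.
        -- exists N, true; auto.
        -- exists N, false; auto.
    + intros z [k [s [H1 [H2 _]]]] [[H3 _]|[H3 _]]; rewrite H1 in H3; injection H3; intros; lia.
    + intros z [H1 _] [H2 _]. rewrite H1 in H2; discriminate.
Qed.

Section RotatedCells.
Variables (Y : Type) (D : prob (discrete Y)) (a0 b0 : Y) (Bp : Y -> Prop).
Hypothesis Hab : a0 <> b0.
Hypothesis HB : forall y, Bp y <-> y = a0 \/ y = b0.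

(* Cells [(k, s)] of the extended space are classified modulo [n]; the points of
   [Y] lying in [Bp] carry no mass and are put in class [(0, false)]. *)
Definition cells : Type := ((nat * bool) + Y)%type.

Definition in_B (y : Y) : bool := if excluded_middle_informative (Bp y) then true else false.

Definition cell_label (n m i k : nat) (s : bool) : Y :=
  if sent_to_a0 m ((k + i) mod n) s then a0 else b0.

Definition rotation (n m i : nat) (z : cells) : Y :=
  match z with
  | inl (k, s) => cell_label n m i k s
  | inr y => if in_B y then cell_label n m i 0 false else y
  end.

Definition cell_class (n : nat) (z : cells) : option (nat * bool) :=
  match z with
  | inl (k, s) => Some ((k mod n)%nat, s)
  | inr y => if in_B y then Some (0%nat, false) else None
  end.

Definition rotation_measurable n m i :
  measurable_map (discrete cells) (discrete Y) (rotation n m i) := fun _ _ => I.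

Definition spread (n : nat) (u v : R) (S : mset (discrete cells)) : R :=
  rsum (fun k => u * indicator (proj1_sig S (inl (k, true)))
               + v * indicator (proj1_sig S (inl (k, false)))) n
  + D (dset (fun y => ~ Bp y /\ proj1_sig S (inr y))).

Section Spread.
Variables (n : nat) (u v : R).
Hypotheses (Hu : 0 <= u) (Hv : 0 <= v) (Hfull : INR n * (u + v) = D (dset Bp)).

Lemma spread_nonneg S : 0 <= spread n u v S.
Proof.
  unfold spread. pose proof (pr_nonneg _ D (dset (fun y => ~ Bp y /\ proj1_sig S (inr y)))).
  enough (0 <= rsum (fun k => u * indicator (proj1_sig S (inl (k, true)))
                            + v * indicator (proj1_sig S (inl (k, false)))) n) by lra.
  apply rsum_nonneg; intros k _.
  pose proof (indicator_nonneg (proj1_sig S (inl (k, true)))).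
  pose proof (indicator_nonneg (proj1_sig S (inl (k, false)))). nra.
Qed.

Lemma spread_full : spread n u v (mfull _) = 1.
Proof.
  unfold spread; simpl.
  rewrite (rsum_ext _ (fun _ => u + v)).
  - rewrite rsum_const, Hfull, (dset_ext D (fun y => ~ Bp y /\ True) (fun y => ~ Bp y)) by tauto.
    rewrite dset_compl. lra.
  - intros k _. unfold indicator. destruct excluded_middle_informative; [lra|tauto].
Qed.

Lemma spread_add (A B : mset (discrete cells)) :
  (forall w, proj1_sig A w -> proj1_sig B w -> False) ->
  spread n u v (munion A B) = spread n u v A + spread n u v B.
Proof.
  intros H. unfold spread, munion; cbn [proj1_sig].
  rewrite (rsum_ext _ (fun k => (u * indicator (proj1_sig A (inl (k, true)))
                                 + v * indicator (proj1_sig A (inl (k, false))))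
                              + (u * indicator (proj1_sig B (inl (k, true)))
                                 + v * indicator (proj1_sig B (inl (k, false)))))).
  - rewrite rsum_plus.
    rewrite (dset_ext D _ (fun y => (~ Bp y /\ proj1_sig A (inr y))
                                  \/ (~ Bp y /\ proj1_sig B (inr y)))) by (intros; simpl; tauto).
    rewrite dset_union by (intros z [_ H1] [_ H2]; exact (H _ H1 H2)). lra.
  - intros k _. rewrite !indicator_or by apply H. lra.
Qed.

Definition spread_prob : prob (discrete cells) :=
  {| pr := spread n u v; pr_nonneg := spread_nonneg;
     pr_full := spread_full; pr_add := spread_add |}.

End Spread.

Lemma in_B_true y : in_B y = true <-> Bp y.
Proof. unfold in_B; destruct excluded_middle_informative; split; auto; discriminate. Qed.

Lemma in_B_false y : in_B y = false <-> ~ Bp y.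
Proof. unfold in_B; destruct excluded_middle_informative; split; auto; try discriminate; tauto. Qed.

Lemma cell_label_cases n m i k s : cell_label n m i k s = a0 \/ cell_label n m i k s = b0.
Proof. unfold cell_label; destruct sent_to_a0; auto. Qed.

Lemma rotation_in_B n m i z : Bp (rotation n m i z) <-> cell_class n z <> None.
Proof.
  destruct z as [[k s]|y]; simpl.
  - split; [discriminate|]. intros _. apply HB, cell_label_cases.
  - destruct (in_B y) eqn:E.
    + split; [discriminate|]. intros _. apply HB, cell_label_cases.
    + apply in_B_false in E. split; [tauto|]. intros H; exfalso; apply H; auto.
Qed.

Lemma rotation_eq_a0 n m i z : (0 < n)%nat ->
  rotation n m i z = a0 <->
  exists k s, cell_class n z = Some (k, s) /\ (k < n)%nat /\ sent_to_a0 m ((k + i) mod n) s = true.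
Proof.
  intros Hn. destruct z as [[k s]|y]; simpl.
  - unfold cell_label. rewrite <- (Nat.Div0.add_mod_idemp_l k i n). split.
    + intros H. exists (k mod n)%nat, s. split; auto. split; [apply Nat.mod_upper_bound; lia|].
      destruct sent_to_a0; auto; exfalso; apply Hab; auto.
    + intros [k' [s' [H1 [H2 H3]]]]. injection H1; intros; subst. rewrite H3; auto.
  - destruct (in_B y) eqn:E.
    + unfold cell_label. split.
      * intros H. exists 0%nat, false. split; auto. split; [lia|].
        destruct sent_to_a0; auto; exfalso; apply Hab; auto.
      * intros [k' [s' [H1 [H2 H3]]]]. injection H1; intros; subst. rewrite H3; auto.
    + apply in_B_false in E. split.
      * intros ->. exfalso; apply E, HB; auto.
      * intros [k' [s' [H1 _]]]; discriminate.
Qed.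

Lemma cell_class_lt n z k s : (0 < n)%nat -> cell_class n z = Some (k, s) -> (k < n)%nat.
Proof.
  intros Hn. destruct z as [[k' s']|y]; simpl.
  - intros H; injection H; intros; subst. apply Nat.mod_upper_bound; lia.
  - destruct in_B; intros H; [injection H; intros; subst; lia|discriminate].
Qed.

(* Cell [n (i + 1) - i] sits at position [0] and cell [n (i + 1) - i - 1] at
   position [n - 1] after rotating by [i]. *)
Lemma rotation_surjective n m i : (1 <= m <= n)%nat -> surjective (rotation n m i).
Proof.
  intros Hmn y. destruct (classic (Bp y)) as [HBy|HBy].
  - apply HB in HBy as [->| ->].
    + exists (inl (n * (i + 1) - i, true)%nat). simpl. unfold cell_label.
      replace ((n * (i + 1) - i + i) mod n)%nat with O.
      * unfold sent_to_a0; destruct m as [|[|m']]; [lia|reflexivity|reflexivity].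
      * replace (n * (i + 1) - i + i)%nat with ((i + 1) * n)%nat by nia.
        rewrite Nat.Div0.mod_mul; auto.
    + exists (inl (n * (i + 1) - i - 1, false)%nat). simpl. unfold cell_label.
      replace ((n * (i + 1) - i - 1 + i) mod n)%nat with (n - 1)%nat.
      * unfold sent_to_a0. rewrite (proj2 (Nat.ltb_ge _ _)) by lia. reflexivity.
      * replace (n * (i + 1) - i - 1 + i)%nat with ((n - 1) + i * n)%nat by nia.
        rewrite Nat.Div0.mod_add, Nat.mod_small; lia.
  - exists (inr y). simpl. destruct (in_B y) eqn:E; auto.
    apply in_B_true in E. tauto.
Qed.

Lemma push_spread n m u v (Hu : 0 <= u) (Hv : 0 <= v)
  (Hfull : INR n * (u + v) = D (dset Bp)) (Hmn : (1 <= m <= n)%nat)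
  (Ha0 : (INR m - 1) * (u + v) + u = D (dset (fun y => y = a0))) (i : nat) :
  push (rotation_measurable n m i) (spread_prob n u v Hu Hv Hfull) = D.
Proof.
  apply prob_ext. intros E. rewrite (dset_eta E). set (S := proj1_sig E).
  change (spread n u v (preim (rotation_measurable n m i) (dset S)) = D (dset S)).
  unfold spread, preim; cbn [proj1_sig dset].
  rewrite (dset_ext D (fun y => ~ Bp y /\ S (rotation n m i (inr y))) (fun y => ~ Bp y /\ S y)).
  2:{ intros y. simpl. destruct (in_B y) eqn:Ey; [|tauto].
      apply in_B_true in Ey. tauto. }
  set (A := fun d => u * bool_to_R (sent_to_a0 m d true) + v * bool_to_R (sent_to_a0 m d false)).
  set (cell := fun d => indicator (S a0) * A d + indicator (S b0) * ((u + v) + (-1) * A d)).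
  rewrite (rsum_ext _ (fun k => cell ((k + i) mod n)%nat)).
  2:{ intros k _. unfold cell, rotation, A, cell_label, bool_to_R.
      destruct (sent_to_a0 m ((k + i) mod n) true), (sent_to_a0 m ((k + i) mod n) false); ring. }
  rewrite (rsum_rot cell n i) by lia. unfold cell.
  rewrite rsum_plus, !rsum_scal, rsum_plus, rsum_scal, rsum_const.
  unfold A. rewrite rsum_sent_to_a0, Ha0, Hfull by lia.
  rewrite (dset_split D S Bp).
  rewrite (dset_ext D (fun z => Bp z /\ S z) (fun z => (z = a0 /\ S z) \/ (z = b0 /\ S z)))
    by (intros z; rewrite HB; tauto).
  rewrite dset_union by (intros z [-> _] [Hz _]; auto).
  rewrite !dset_point_inter, (dset_pair D Bp a0 b0 Hab HB). ring.
Qed.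

End RotatedCells.

Lemma pushset_single {W Y} {F : algebra W} {G : algebra Y} {f : W -> Y}
  (Hf : measurable_map F G f) (P : prob F) :
  pushset Hf (psingle P) = psingle (push Hf P).
Proof.
  apply functional_extensionality; intros Q. apply propositional_extensionality.
  unfold pushset, psingle. split; [intros [P0 [-> ->]]; auto|intros ->; exists P; auto].
Qed.

Section RepresentationShifts.
Variable Upd : upd_family.
Hypothesis HP2 : P2 Upd.

Lemma upd_single_push {W Y} {F : algebra W} {G : algebra Y} (f : W -> Y)
  (Hs : surjective f) (Hf : measurable_map F G f) (P P' : prob F) (B : mset G) :
  (forall Q, Upd W F (psingle P) (preim Hf B) Q <-> Q = P') ->
  forall Q, Upd Y G (psingle (push Hf P)) B Q <-> Q = push Hf P'.
Proof.
  intros HU Q. rewrite <- pushset_single, (HP2 W Y F G f Hs Hf (psingle P) B Q).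
  unfold pushset. split.
  - intros [P0 [H1 ->]]. apply HU in H1. subst; auto.
  - intros ->. exists P'. split; auto. apply HU; auto.
Qed.

Lemma upd_common_lift {W Y I} {F : algebra W} {G : algebra Y} (i0 : I) (g : I -> W -> Y)
  (Hs : forall i, surjective (g i)) (Hg : forall i, measurable_map F G (g i))
  (Q0 : prob F) (D rho : prob G) (B : mset G) (C : mset F) :
  (forall i, preim (Hg i) B = C) -> (forall i, push (Hg i) Q0 = D) ->
  (forall Q, Upd Y G (psingle D) B Q <-> Q = rho) ->
  exists R, Upd W F (psingle Q0) C R /\ forall i, push (Hg i) R = rho.
Proof.
  intros HC Hpush HU.
  assert (Hps : forall i, pushset (Hg i) (psingle Q0) = psingle D)
    by (intros i; rewrite pushset_single, Hpush; reflexivity).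
  destruct (proj1 (HP2 _ _ _ _ _ (Hs i0) (Hg i0) (psingle Q0) B rho)) as [R [HR _]].
  { rewrite Hps. apply HU. reflexivity. }
  rewrite HC in HR. exists R. split; auto.
  intros i. apply HU. rewrite <- (Hps i).
  apply (HP2 _ _ _ _ _ (Hs i) (Hg i)). exists R. rewrite HC. auto.
Qed.

End RepresentationShifts.

(* The [t := p / (p + q)] fraction of [p + q] is split into [n] cells of mass [w]:
   [m - 1 <= n t <= m] whole cells and a part [u] of the [m]-th one. *)
Lemma cell_parameters (p q : R) (n : nat) : 0 <= p -> 0 < q -> (0 < n)%nat ->
  exists m u v, (1 <= m <= n)%nat /\ 0 <= u /\ 0 <= v /\ INR n * (u + v) = p + q /\
    (INR m - 1) * (u + v) + u = p /\ INR m <= INR n * (p / (p + q)) + 1.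
Proof.
  intros Hp Hq Hn.
  set (t := p / (p + q)).
  assert (Ht : t * (p + q) = p) by (unfold t; field; lra).
  assert (HnR : 0 < INR n) by (apply lt_0_INR; lia).
  assert (Ht0 : 0 <= t) by nra.
  assert (Ht1 : t < 1) by nra.
  destruct (archimed (INR n * t)) as [Hm1 Hm2].
  set (m := Z.to_nat (up (INR n * t))).
  assert (Hm : INR m = IZR (up (INR n * t))).
  { unfold m. rewrite INR_IZR_INZ, Z2Nat.id; [reflexivity|]. apply le_IZR. nra. }
  rewrite <- Hm in Hm1, Hm2.
  set (w := (p + q) / INR n).
  assert (Hnw : INR n * w = p + q) by (unfold w; field; lra).
  assert (Hntw : INR n * t * w = p) by (rewrite <- Ht, <- Hnw; ring).
  assert (Hw : 0 <= w) by nra.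
  exists m, (p - (INR m - 1) * w), (w - (p - (INR m - 1) * w)).
  split; [split|].
  - destruct m; [simpl in Hm1; nra|lia].
  - enough (INR m < INR (S n)) by (apply INR_lt in H; lia). rewrite S_INR. nra.
  - repeat split; try ring; try lra.
    + enough ((INR m - 1) * w <= INR n * t * w) by lra. apply Rmult_le_compat_r; lra.
    + enough (INR n * t * w <= INR m * w) by lra. apply Rmult_le_compat_r; lra.
Qed.

Section SymmetryBound.
Variables (Upd : upd_family) (Y : Type) (D rho : prob (discrete Y)) (a0 b0 : Y) (Bp : Y -> Prop).
Hypotheses (HP1 : P1 Upd) (HP2 : P2 Upd).
Hypotheses (Hab : a0 <> b0) (HB : forall y, Bp y <-> y = a0 \/ y = b0).
Hypothesis HU : forall Q, Upd Y (discrete Y) (psingle D) (dset Bp) Q <-> Q = rho.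

(* A single [R] in the update of [spread] is pushed to [rho] by all [n] rotations,
   and no half-cell is sent to [a0] by more than [m] of them. *)
Lemma upd_point_le_cell_ratio n m u v (Hu : 0 <= u) (Hv : 0 <= v)
  (Hfull : INR n * (u + v) = D (dset Bp)) (Hmn : (1 <= m <= n)%nat)
  (Ha0 : (INR m - 1) * (u + v) + u = D (dset (fun y => y = a0))) :
  INR n * rho (dset (fun y => y = a0)) <= INR m.
Proof.
  assert (Hn : (0 < n)%nat) by lia.
  set (rot := rotation Y a0 b0 Bp n m).
  set (Hrot := rotation_measurable Y a0 b0 Bp n m).
  destruct (upd_common_lift Upd HP2 0%nat rot (fun i => rotation_surjective Y a0 b0 Bp HB n m i Hmn)
              Hrot (spread_prob Y D Bp n u v Hu Hv Hfull) D rho (dset Bp) (preim (Hrot 0%nat) (dset Bp)))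
    as [R [HR Hpush]]; auto.
  { intros i. apply mset_ext; intros z; unfold rot; simpl. rewrite !(rotation_in_B Y a0 b0 Bp HB). tauto. }
  { intros i. apply push_spread; auto. }
  set (al := fun k => R (dset (fun z => cell_class Y Bp n z = Some (k, true)))).
  set (be := fun k => R (dset (fun z => cell_class Y Bp n z = Some (k, false)))).
  assert (Hrho : forall i, rho (dset (fun y => y = a0)) =
    rsum (fun k => bool_to_R (sent_to_a0 m ((k + i) mod n) true) * al k
                 + bool_to_R (sent_to_a0 m ((k + i) mod n) false) * be k) n).
  { intros i. rewrite <- (Hpush i). simpl.
    unfold al, be. rewrite <- (pr_classes_rsum R (cell_class Y Bp n) (fun k s => sent_to_a0 m ((k + i) mod n) s)).
    apply pr_ext. intros z; simpl. apply rotation_eq_a0; auto. }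
  assert (Hone : rsum (fun k => al k + be k) n = 1).
  { rewrite <- (HP1 _ _ _ _ _ HR).
    rewrite (rsum_ext _ (fun k => bool_to_R true * al k + bool_to_R true * be k))
      by (intros; simpl; ring).
    unfold al, be. rewrite <- (pr_classes_rsum R (cell_class Y Bp n) (fun _ _ => true)).
    apply pr_ext. intros z; simpl. rewrite (rotation_in_B Y a0 b0 Bp HB). split.
    - intros [k [s [E _]]]. rewrite E. discriminate.
    - destruct (cell_class Y Bp n z) as [[k s]|] eqn:E; [|tauto]. intros _. exists k, s.
      split; auto. split; auto. eapply cell_class_lt; eauto. }
  rewrite <- rsum_const, (rsum_ext _ _ _ (fun i _ => Hrho i)).
  rewrite <- (Rmult_1_r (INR m)), <- Hone.
  apply rsum_rotations_sent_to_a0; auto. intros k. apply pr_nonneg.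
Qed.

Hypothesis Hpos : 0 < D (dset Bp).

Lemma upd_point_le :
  rho (dset (fun y => y = a0)) <= D (dset (fun y => y = a0)) / D (dset Bp).
Proof.
  assert (HDB := dset_pair D Bp a0 b0 Hab HB).
  set (p := D (dset (fun y => y = a0))) in *. set (q := D (dset (fun y => y = b0))) in *.
  assert (Hp : 0 <= p) by apply pr_nonneg.
  destruct (Rle_lt_or_eq_dec 0 q ltac:(apply pr_nonneg)) as [Hq|Hq].
  - rewrite HDB. apply Rle_plus_epsilon. intros eps Heps.
    destruct (archimed_cor1 eps Heps) as [n [Hn1 Hn]].
    destruct (cell_parameters p q n Hp Hq Hn) as [m [u [v [Hmn [Hu [Hv [Hfull [Ha0 Hm]]]]]]]].
    rewrite <- HDB in Hfull.
    pose proof (upd_point_le_cell_ratio n m u v Hu Hv Hfull Hmn Ha0) as Hle.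
    assert (HnR : 0 < INR n) by (apply lt_0_INR; lia).
    enough (rho (dset (fun y => y = a0)) <= p / (p + q) + / INR n) by lra.
    apply (Rmult_le_reg_l (INR n)); auto.
    rewrite Rmult_plus_distr_l, Rinv_r by lra. lra.
  - rewrite HDB, <- Hq, Rplus_0_r, Rdiv_diag by lra. apply pr_le1.
Qed.

End SymmetryBound.

Lemma upd_point_eq (Upd : upd_family) (HP1 : P1 Upd) (HP2 : P2 Upd) (Y : Type)
  (D rho : prob (discrete Y)) (a0 b0 : Y) (Bp : Y -> Prop) :
  a0 <> b0 -> (forall y, Bp y <-> y = a0 \/ y = b0) -> 0 < D (dset Bp) ->
  (forall Q, Upd Y (discrete Y) (psingle D) (dset Bp) Q <-> Q = rho) ->
  rho (dset (fun y => y = a0)) = D (dset (fun y => y = a0)) / D (dset Bp).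
Proof.
  intros Hab HB Hpos HU.
  assert (HB' : forall y, Bp y <-> y = b0 \/ y = a0) by (intros y; rewrite HB; tauto).
  pose proof (upd_point_le Upd Y D rho a0 b0 Bp HP1 HP2 Hab HB HU Hpos) as Ha.
  pose proof (upd_point_le Upd Y D rho b0 a0 Bp HP1 HP2 (not_eq_sym Hab) HB' HU Hpos) as Hb.
  assert (Hrho : rho (dset Bp) = 1) by (apply (HP1 _ _ (psingle D)), HU; reflexivity).
  rewrite (dset_pair rho Bp a0 b0 Hab HB) in Hrho.
  rewrite (dset_pair D Bp a0 b0 Hab HB) in *.
  assert (D (dset (fun y => y = a0)) / (D (dset (fun y => y = a0)) + D (dset (fun y => y = b0)))
        + D (dset (fun y => y = b0)) / (D (dset (fun y => y = a0)) + D (dset (fun y => y = b0)))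
        = 1) by (field; lra).
  lra.
Qed.

Definition image_of {W Y} (f : W -> Y) : Type := {y : Y | exists w, f w = y}.

Definition corestrict {W Y} (f : W -> Y) (w : W) : image_of f :=
  exist _ (f w) (ex_intro _ w eq_refl).

Lemma corestrict_surjective {W Y} (f : W -> Y) : surjective (corestrict f).
Proof.
  intros [y [w <-]]. exists w. reflexivity.
Qed.

Lemma corestrict_eq {W Y} (f : W -> Y) (w : W) (y : image_of f) :
  corestrict f w = y <-> f w = proj1_sig y.
Proof.
  destruct y as [y Hy]; simpl. split; [intros E; exact (f_equal (@proj1_sig _ _) E)|].
  intros <-. unfold corestrict. f_equal. apply proof_irrelevance.
Qed.

Lemma corestrict_measurable {W Y} (F : algebra W) (f : W -> Y) :
  (forall S : Y -> Prop, in_alg F (fun w => S (f w))) ->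
  forall S : image_of f -> Prop, in_alg F (fun w => S (corestrict f w)).
Proof.
  intros Hf S.
  apply (in_alg_ext (fun w => exists h, S (exist _ (f w) h))); [|exact (Hf (fun y => exists h, S (exist _ y h)))].
  intros w. split; [intros [h Hh]|intros Hw; eexists; exact Hw].
  unfold corestrict. rewrite (proof_irrelevance _ h (ex_intro _ w eq_refl)) in Hh. exact Hh.
Qed.

Lemma upd_single_pos (Upd : upd_family) (HUpd : is_update_family Upd)
  (W : Type) (F : algebra W) (P P' : prob F) (B : mset F) :
  Upd W F (psingle P) B P' -> 0 < P B.
Proof.
  intros HP'. destruct (Rle_lt_or_eq_dec 0 (P B) (pr_nonneg F P B)) as [H|H]; auto.
  exfalso. apply (HUpd W F (psingle P) B) with P'; auto.
  intros P0 ->. auto.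
Qed.

Section Conditioning.
Variables (Upd : upd_family) (W : Type) (F : algebra W) (P P' : prob F) (B : mset F).
Hypotheses (HP1 : P1 Upd) (HP2 : P2 Upd).
Hypothesis HU : forall Q, Upd W F (psingle P) B Q <-> Q = P'.
Hypothesis HPB : 0 < P B.

Lemma upd_full : P' B = 1.
Proof. apply (HP1 W F (psingle P)), HU. reflexivity. Qed.

Lemma upd_fibre_surjective (Y : Type) (f : W -> Y) (Hs : surjective f)
  (Hf : forall S : Y -> Prop, in_alg F (fun w => S (f w))) (a0 b0 : Y) (Hab : a0 <> b0)
  (HfB : forall w, proj1_sig B w <-> f w = a0 \/ f w = b0)
  (A0 : mset F) (HfA : forall w, proj1_sig A0 w <-> f w = a0) :
  P' A0 = P A0 / P B.
Proof.
  set (Hm := (fun S _ => Hf S) : measurable_map F (discrete Y) f).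
  set (Bp := fun y => y = a0 \/ y = b0).
  assert (HpB : preim Hm (dset Bp) = B).
  { apply mset_ext; intros w; simpl. unfold Bp. rewrite HfB. tauto. }
  assert (HpA : preim Hm (dset (fun y => y = a0)) = A0).
  { apply mset_ext; intros w; simpl. rewrite HfA. tauto. }
  pose proof (upd_single_push Upd HP2 f Hs Hm P P' (dset Bp)) as HUY.
  rewrite HpB in HUY. specialize (HUY HU).
  assert (Hpos : 0 < push Hm P (dset Bp)) by (simpl; rewrite HpB; exact HPB).
  pose proof (upd_point_eq Upd HP1 HP2 Y (push Hm P) (push Hm P') a0 b0 Bp Hab
                (fun y => iff_refl _) Hpos HUY) as K.
  simpl in K. rewrite HpA, HpB in K. exact K.
Qed.

(* If [a0] or [b0] is missing from the range of [f], the update is forced by P1;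
   otherwise [f] is a representation shift onto its image. *)
Lemma upd_fibre (Y : Type) (f : W -> Y)
  (Hf : forall S : Y -> Prop, in_alg F (fun w => S (f w))) (a0 b0 : Y) (Hab : a0 <> b0)
  (HfB : forall w, proj1_sig B w <-> f w = a0 \/ f w = b0)
  (A0 : mset F) (HfA : forall w, proj1_sig A0 w <-> f w = a0) :
  P' A0 = P A0 / P B.
Proof.
  destruct (classic (exists w, f w = a0)) as [[wa Ha]|Na].
  2:{ rewrite !(pr_empty _ A0) by (intros w Hw; apply Na; exists w; apply HfA, Hw).
      unfold Rdiv; ring. }
  destruct (classic (exists w, f w = b0)) as [[wb Hb]|Nb].
  2:{ assert (HAB : forall w, proj1_sig A0 w <-> proj1_sig B w).
      { intros w. rewrite HfA, HfB. split; [tauto|]. intros [H|H]; [exact H|].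
        exfalso. apply Nb. eauto. }
      rewrite (pr_ext P' A0 B HAB), (pr_ext P A0 B HAB), upd_full. field. lra. }
  apply (upd_fibre_surjective (image_of f) (corestrict f) (corestrict_surjective f)
           (corestrict_measurable F f Hf) (exist _ a0 (ex_intro _ wa Ha))
           (exist _ b0 (ex_intro _ wb Hb))).
  - intros E. apply Hab. exact (f_equal (@proj1_sig _ _) E).
  - intros w. rewrite !corestrict_eq. apply HfB.
  - intros w. rewrite corestrict_eq. apply HfA.
Qed.

End Conditioning.

Section Classify.
Context {W : Type} {F : algebra W} (A B : mset F).

Definition classify (w : W) : option bool :=
  if excluded_middle_informative (proj1_sig B w)
  then Some (if excluded_middle_informative (proj1_sig A w) then true else false)
  else None.

Lemma classify_measurable (S : option bool -> Prop) : in_alg F (fun w => S (classify w)).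
Proof.
  pose proof (proj2_sig A) as HA. pose proof (proj2_sig B) as HB. simpl in HA, HB.
  apply (in_alg_ext (fun w => ((proj1_sig A w /\ proj1_sig B w) /\ S (Some true))
                           \/ (((proj1_sig B w /\ ~ proj1_sig A w) /\ S (Some false))
                           \/ ((~ proj1_sig B w) /\ S None)))).
  - intros w. unfold classify.
    destruct excluded_middle_informative; [destruct excluded_middle_informative|]; tauto.
  - repeat apply alg_union; apply in_alg_and_const;
      repeat first [apply alg_inter | apply alg_compl]; assumption.
Qed.

Lemma classify_B (w : W) :
  proj1_sig B w <-> classify w = Some true \/ classify w = Some false.
Proof.
  unfold classify. destruct excluded_middle_informative; [destruct excluded_middle_informative|];
    intuition discriminate.
Qed.

Lemma classify_inter (w : W) : proj1_sig (minter A B) w <-> classify w = Some true.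
Proof.
  unfold classify; simpl.
  destruct excluded_middle_informative; [destruct excluded_middle_informative|];
    intuition discriminate.
Qed.

End Classify.

Theorem proposition4p4 (Upd : upd_family)
  (HUpd : is_update_family Upd) (HP1 : P1 Upd) (HP2 : P2 Upd)
  (W : Type) (F : algebra W) (P : prob F) (B : mset F) (P' : prob F) :
  (forall Q, Upd W F (psingle P) B Q <-> Q = P') ->
  0 < P B /\ forall A : mset F, P' A = P (minter A B) / P B.
Proof.
  intros HU.
  assert (HPB : 0 < P B) by (apply (upd_single_pos Upd HUpd W F P P' B), HU; reflexivity).
  split; [exact HPB|]. intros A.
  rewrite (pr_inter_of_full P' A B (upd_full Upd W F P P' B HP1 HU)).
  apply (upd_fibre Upd W F P P' B HP1 HP2 HU HPB (option bool) (classify A B)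
           (classify_measurable A B) (Some true) (Some false)); [discriminate| |].
  - apply classify_B.
  - apply classify_inter.
Qed.
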